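(* Let $m\ge1$, $k\ge 1$, $n\ge 2$ be integers, let $\ell=(\ell_1,\dots,\ell_m)$ with $\ell_i\ge0$, $\sum_i\ell_i=1$, and let $\mathbf{P}=(p_{ij})$ be a symmetric $m\times m$ matrix with entries in $[0,1]$. Let $S\subseteq\{(i,j): i,j\in\{1,\dots,n\},\ i<j\}$ be any fixed set of node pairs, and let $A$ be the event that every pair in $S$ is an edge of the graph. Then $$\Pr_{\mathcal{W}_k(\mathbf{P},\ell)}(A) = \Pr_{\mathcal{W}_1(\mathbf{P},\ell)}(A)^k,$$ where $\Pr_{\mathcal{W}_j(\mathbf{P},\ell)}$ denotes probability for a random graph on nodes $\{1,\dots,n\}$ drawn from $\mathcal{W}_j(\mathbf{P},\ell)$.
   Context: Multifractal network generator (MFNG). Given $m$, $\ell$, $\mathbf{P}$ and a recursion depth $k\ge 1$, the measure $\mathcal{W}_k(\mathbf{P},\ell)$ is the distribution of the undirected random graph on $n$ labelled nodes produced as follows. (1) Partition $[0,1]$ into $m$ consecutive subintervals of lengths $\ell_1,\dots,\ell_m$; recursively partition each subinterval into $m$ pieces with relative lengths $\ell_1,\dots,\ell_m$, for a total of $k$ levels, obtaining $m^k$ intervals indexed by $(i_1,\dots,i_k)\in[m]^k$ with lengths $\prod_{r=1}^k\ell_{i_r}$. (2) Each node $u\in\{1,\dots,n\}$ is placed at an independent uniform point of $[0,1]$ and receives the $k$-tuple of categories $c(u)=(i_1,\dots,i_k)$ of the interval containing it (so $\Pr(c(u)=(i_1,\dots,i_k))=\prod_r\ell_{i_r}$, independently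 across nodes). (3) Conditionally on the categories, independently for each pair $u\ne v$ with $c(u)=(i_1,\dots,i_k)$, $c(v)=(j_1,\dots,j_k)$, the edge $\{u,v\}$ is present with probability $\prod_{r=1}^k p_{i_rj_r}$. *)

(* Discrete (finite) description of the MFNG measure W_k(P, ell). *)
From mathcomp Require Import all_boot all_order all_algebra.
Set Implicit Arguments. Unset Strict Implicit. Unset Printing Implicit Defensive.
Import Order.TTheory GRing.Theory Num.Theory.
Local Open Scope ring_scope.

Section MFNG.
Variables (R : realFieldType) (m k n : nat).

(* Unordered node pairs {u,v} represented as ordered pairs (u,v) with u < v
   (nodes are 'I_n, i.e. 0-based labels 0..n-1 for the paper's 1..n). *)
Definition upairs : {set 'I_n * 'I_n} := [set e : 'I_n * 'I_n | (e.1 < e.2)%N].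

Definition cat_tuple := {ffun 'I_k -> 'I_m}.

(* Pr(c(u) = (i_1..i_k)) = prod_r ell_{i_r}  (length of the level-k interval). *)
Definition cat_weight (ell : 'I_m -> R) (t : cat_tuple) : R :=
  \prod_(r < k) ell (t r).

Definition edge_prob (P : 'M[R]_m) (t t' : cat_tuple) : R :=
  \prod_(r < k) P (t r) (t' r).

Definition mfng_graph_prob (P : 'M[R]_m) (ell : 'I_m -> R)
    (G : {set 'I_n * 'I_n}) : R :=
  \sum_(c : {ffun 'I_n -> cat_tuple})
    (\prod_(u : 'I_n) cat_weight ell (c u)) *
    \prod_(e in upairs)
      (if e \in G then edge_prob P (c e.1) (c e.2)
       else 1 - edge_prob P (c e.1) (c e.2)).

Definition mfng_prob (P : 'M[R]_m) (ell : 'I_m -> R)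
    (A : pred {set 'I_n * 'I_n}) : R :=
  \sum_(G : {set 'I_n * 'I_n} | (G \subset upairs) && A G)
    mfng_graph_prob P ell G.

End MFNG.

From mathcomp Require Import all_boot all_order all_algebra.
Import Order.TTheory GRing.Theory Num.Theory.
Local Open Scope ring_scope.

(* Summing the graph probabilities over all supersets of [S] leaves, for each
   category assignment, the product of the edge probabilities over [S].  Both
   the category weight and the edge probability are products over the [k]
   levels, so transposing an assignment of [k]-tuples into [k] assignments of
   single categories factors the sum into the [k]-th power of the one-level
   sum. *)

Lemma sum_supersets_prod (R : comPzRingType) (T : finType) (U S : {set T})
    (a : T -> R) :
  S \subset U ->
  \sum_(G : {set T} | (G \subset U) && (S \subset G))
     \prod_(e in U) (if e \in G then a e else 1 - a e) = \prod_(e in S) a e.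
Proof.
move=> SU.
(* Expand each superset term to a product over all of [T]; by distributivity
   the sum becomes a product of [a e] (on [S]) and [a e + (1 - a e)] = 1. *)
pose inG e := if e \in U then a e else 0.
pose outG e := if e \in S then 0 else if e \in U then 1 - a e else 1.
have termE (G : {set T}) : (if (G \subset U) && (S \subset G)
                then \prod_(e in U) (if e \in G then a e else 1 - a e) else 0)
               = \prod_e (if e \in G then inG e else outG e).
  case: ifP => [/andP [GU SG]|/negbT].
    rewrite big_mkcond; apply: eq_bigr => e _; rewrite /inG /outG.
    case eU: (e \in U); case eG: (e \in G); case eS: (e \in S) => //;
      first [by rewrite (subsetP SG e eS) in eG | by rewrite (subsetP GU e eG) in eU].
  rewrite negb_and => /orP [/subsetPn [e eG eU]|/subsetPn [e eS eG]];
    rewrite (bigD1 e) //= ?eG ?(negbTE eG).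
    by rewrite /inG (negbTE eU) mul0r.
  by rewrite /outG eS mul0r.
rewrite big_mkcond (eq_bigr _ (fun G _ => termE G)) -bigA_distr.
rewrite [RHS]big_mkcond; apply: eq_bigr => e _; rewrite /inG /outG.
case eS: (e \in S); first by rewrite (subsetP SU e eS) /= addr0.
by case: (e \in U); rewrite /= ?add0r // addrC subrK.
Qed.

Lemma sum_ffun_transpose_prod (R : comPzSemiRingType) (I J T : finType)
    (F : J -> {ffun I -> T} -> R) :
  \sum_(c : {ffun I -> {ffun J -> T}}) \prod_j F j [ffun i => c i j] =
  \prod_j \sum_(x : {ffun I -> T}) F j x.
Proof.
rewrite bigA_distr_bigA.
pose tr (d : {ffun J -> {ffun I -> T}}) : {ffun I -> {ffun J -> T}} :=
  [ffun i => [ffun j => d j i]].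
rewrite (reindex tr); last first.
  exists (fun c : {ffun I -> {ffun J -> T}} =>
    [ffun j => [ffun i => c i j]] : {ffun J -> {ffun I -> T}}) => d _;
  by apply/ffunP => x; rewrite !ffunE; apply/ffunP => y; rewrite !ffunE.
apply: eq_bigr => d _; apply: eq_bigr => j _; congr (F j _).
by apply/ffunP => i; rewrite !ffunE.
Qed.

Section SupersetEvent.
Variables (R : realFieldType) (m n : nat).
Variables (ell : 'I_m -> R) (P : 'M[R]_m) (S : {set 'I_n * 'I_n}).
Hypothesis S_upairs : S \subset upairs n.

Lemma mfng_prob_supersetE (k : nat) :
  mfng_prob k P ell (fun G => S \subset G) =
  \sum_(c : {ffun 'I_n -> {ffun 'I_k -> 'I_m}})
    (\prod_u cat_weight ell (c u)) *
    \prod_(e in S) edge_prob P (c e.1) (c e.2).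
Proof.
rewrite /mfng_prob /mfng_graph_prob exchange_big /=.
by apply: eq_bigr => c _; rewrite -big_distrr sum_supersets_prod.
Qed.

Lemma mfng_prob_superset_pow (k : nat) :
  mfng_prob k P ell (fun G => S \subset G) =
  (\sum_(x : {ffun 'I_n -> 'I_m})
     (\prod_u ell (x u)) * \prod_(e in S) P (x e.1) (x e.2)) ^+ k.
Proof.
rewrite mfng_prob_supersetE -[in RHS](card_ord k) -prodr_const.
rewrite -sum_ffun_transpose_prod; apply: eq_bigr => c _.
rewrite big_split /= /cat_weight /edge_prob.
by rewrite [X in X * _]exchange_big [X in _ * X]exchange_big /=;
  congr (_ * _); apply: eq_bigr => r _; apply: eq_bigr => ? _; rewrite !ffunE.
Qed.

End SupersetEvent.

Theorem theorem1 (R : realFieldType) (m k n : nat)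
  (ell : 'I_m -> R) (P : 'M[R]_m) (S : {set 'I_n * 'I_n}) :
  (1 <= m)%N -> (1 <= k)%N -> (2 <= n)%N ->
  (forall i, 0 <= ell i) -> \sum_(i < m) ell i = 1 ->
  P^T = P -> (forall i j, 0 <= P i j <= 1) ->
  S \subset upairs n ->
  mfng_prob k P ell (fun G => S \subset G) =
    (mfng_prob 1 P ell (fun G => S \subset G)) ^+ k.
Proof.
move=> _ _ _ _ _ _ _ S_upairs.
by rewrite !mfng_prob_superset_pow // expr1.
Qed.
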